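(* Let $K$ be a field, $S=K[x_1,\ldots,x_n]$, $I\subset S$ a monomial ideal with $I\ne S$ and $G(I)=\{x^{a_1},\ldots,x^{a_m}\}$. Let $T$, $T_l$ be as in the context. For $l=1,\ldots,n$ and $j=1,\ldots,m$ let $L_{l,a_j(l)}$ be a monomial ideal of $T_l$ such that $L_{l,a_j(l)}\subset L_{l,a_k(l)}$ whenever $a_j(l)\ge a_k(l)$, and put $L_j=\prod_{l=1}^nL_{l,a_j(l)}\subset T$. Let $\mathbb{F}^*$ be the complex of $L_1,\ldots,L_m$ induced by $I$. Then $\mathbb{F}^*$ is acyclic (i.e. $H_i(\mathbb{F}^* )=0$ for $i>0$) and $H_0(\mathbb{F}^* )=T/L$, where $L=\sum_{j=1}^mL_j$.
   Context: For $a\in\mathbb{N}^n$, $x^a=x_1^{a(1)}\cdots x_n^{a(n)}$; $G(I)$ is the minimal monomial generating set. $T$ is the polynomial ring over $K$ in variables $x_{l1},\ldots,x_{lm_l}$ ($l=1,\ldots,n$) and $T_l=K[x_{l1},\ldots,x_{lm_l}]$. Let $0\to F_p\to\cdots\to F_1\to F_0\to S/I\to 0$ be the $\mathbb{Z}^n$-graded minimal free resolution of $S/I$ with differential $\partial$, where $F_0=S$ with basis $f_{01}$ of degree $0$, and $F_i=\bigoplus_{j=1}^{\beta_i}Sf_{ij}$ with $f_{ij}$ homogeneous of multidegree $a_{ij}\in\mathbb{N}^n$; here $\beta_1=m$, $a_{1j}=a_j$ and $\partial(f_{1j})=x^{a_j}f_{01}$. Write $\partial(f_{ij})=\sum_k\lambda^{(i)}_{kj}x^{a_{ij}-a_{i-1,k}}f_{i-1,k}$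 with $\lambda^{(i)}_{kj}\in K$, where $\lambda^{(i)}_{kj}=0$ whenever $a_{ij}-a_{i-1,k}\notin\mathbb{N}^n$; the matrices $\lambda^{(i)}=(\lambda^{(i)}_{kj})\in K^{\beta_{i-1}\times\beta_i}$ are the scalar matrices ($\lambda^{(1)}=(1,\ldots,1)$). Given monomial ideals $L_1,\ldots,L_m$ of $T$, the complex $\mathbb{F}^*$ of $L_1,\ldots,L_m$ induced by $I$ is defined by $F^*_0=T$, $F^*_i=\bigoplus_{j=1}^{\beta_i}L_{ij}$ for $1\le i\le p$, where $L_{1j}=L_j$ and, for $i\ge2$, $L_{ij}=\bigcap_{k:\lambda^{(i)}_{kj}\neq0}L_{i-1,k}$; the differential $\partial^*:F^*_i\to F^*_{i-1}$ maps a column vector $u=(u_1,\ldots,u_{\beta_i})^T$, $u_j\in L_{ij}$, to $\lambda^{(i)}u$. *)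

From HB Require Import structures.
From mathcomp Require Import all_boot all_order all_algebra.
From mathcomp Require Import mpoly.
Set Implicit Arguments. Unset Strict Implicit. Unset Printing Implicit Defensive.
Import GRing.Theory.
Local Open Scope ring_scope.

Definition ideal_span (R : comNzRingType) (P : R -> Prop) (f : R) : Prop :=
  exists k (c g : 'I_k -> R), (forall i, P (g i)) /\ f = \sum_(i < k) c i * g i.

Definition monomial_ideal (K : fieldType) (n : nat) (G : seq 'X_{1..n})
  : {mpoly K[n]} -> Prop :=
  ideal_span (fun g => exists2 mu, mu \in G & g = 'X_[mu]).

(* T = K[x_{lk} : l < n, k < m l], variables indexed by 'I_(sum_l m l). *)
Definition Tnum (n : nat) (m : 'I_n -> nat) : nat := (\sum_(l < n) m l)%N.

Definition Tvar (n : nat) (m : 'I_n -> nat) (l : 'I_n) (k : 'I_(m l))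
  : 'I_(Tnum m) := @tagnat.Rank n m l k.

Definition Tincl (K : fieldType) (n : nat) (m : 'I_n -> nat) (l : 'I_n)
  (p : {mpoly K[m l]}) : {mpoly K[Tnum m]} :=
  comp_mpoly [tuple 'X_(Tvar k) | k < m l] p.

(* ---- The Z^n-graded free complex over S given by the data
   beta i = rank of F_i, deg i j = a_ij, lam i k j = lambda^{(i)}_{kj}. ---- *)
(* matrix of d_{i+1} : F_{i+1} -> F_i over S *)
Definition dS (K : fieldType) (n : nat) (beta : nat -> nat)
  (deg : nat -> nat -> 'X_{1..n}) (lam : nat -> nat -> nat -> K) (i : nat)
  : 'M[{mpoly K[n]}]_(beta i, beta i.+1) :=
  \matrix_(k < beta i, j < beta i.+1)
     ((lam i.+1 k j)%:MP * 'X_[(deg i.+1 j - deg i k)%MM]).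

(* the minimal generators x^{a_1},...,x^{a_m} of I, a_j = a_{1j}, m = beta 1 *)
Definition gensI (n : nat) (beta : nat -> nat) (deg : nat -> nat -> 'X_{1..n})
  : seq 'X_{1..n} := [seq deg 1%N j | j <- iota 0 (beta 1%N)].

Definition is_min_graded_resolution (K : fieldType) (n : nat) (p : nat)
  (beta : nat -> nat) (deg : nat -> nat -> 'X_{1..n})
  (lam : nat -> nat -> nat -> K) : Prop :=
  [/\
      beta 0%N = 1%N /\ deg 0%N 0%N = 0%MM,
      (forall i, (p < i)%N -> beta i = 0%N),
      (forall j, (j < beta 1)%N -> lam 1%N 0%N j = 1),
      (* homogeneity: lambda_kj = 0 unless a_ij - a_{i-1,k} in N^n *)
      (forall i k j, (k < beta i)%N -> (j < beta i.+1)%N ->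
         lam i.+1 k j != 0 -> (deg i k <= deg i.+1 j)%MM) &
      [/\ (* minimality: nonzero entries of the differentials lie in (x_1..x_n) *)
          (forall i k j, (k < beta i)%N -> (j < beta i.+1)%N ->
             lam i.+1 k j != 0 -> deg i k != deg i.+1 j),
          (forall i (u : 'cV[{mpoly K[n]}]_(beta i.+1)),
             @dS K n beta deg lam i *m u = 0 <->
             exists w : 'cV_(beta i.+2), u = @dS K n beta deg lam i.+1 *m w),
          (* H_0 = S/I, i.e. im d_1 = I *)
          (forall f : {mpoly K[n]},
             @monomial_ideal K n (gensI beta deg) f <->
             exists w : 'cV_(beta 1%N), @dS K n beta deg lam 0 *m w = const_mx f) &
          (forall j k, (j < beta 1)%N -> (k < beta 1)%N -> j != k ->
             ~~ (deg 1%N j <= deg 1%N k)%MM)]].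

Definition Lprod (K : fieldType) (n : nat) (m : 'I_n -> nat)
  (Lgen : forall l : 'I_n, nat -> seq 'X_{1..m l}) (a : 'X_{1..n})
  : {mpoly K[Tnum m]} -> Prop :=
  ideal_span (fun g => exists u : forall l : 'I_n, {mpoly K[m l]},
     (forall l, monomial_ideal (Lgen l (a l)) (u l)) /\
     g = \prod_(l < n) Tincl (u l)).

(* membership in L_{ij}: L_{0,j} = T, L_{1j} = L_j,
   L_{i+1,j} = \bigcap_{k : lambda^{(i+1)}_{kj} != 0} L_{ik} *)
Fixpoint Lind (K : fieldType) (n : nat) (m : 'I_n -> nat)
  (Lgen : forall l : 'I_n, nat -> seq 'X_{1..m l})
  (beta : nat -> nat) (deg : nat -> nat -> 'X_{1..n})
  (lam : nat -> nat -> nat -> K) (i j : nat) (f : {mpoly K[Tnum m]}) : Prop :=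
  match i with
  | 0 => True
  | i'.+1 =>
      match i' with
      | 0 => @Lprod K n m Lgen (deg 1%N j) f
      | _ => forall k, (k < beta i')%N -> lam i k j != 0 ->
               @Lind K n m Lgen beta deg lam i' k f
      end
  end.

Definition Fstar (K : fieldType) (n : nat) (m : 'I_n -> nat)
  (Lgen : forall l : 'I_n, nat -> seq 'X_{1..m l})
  (beta : nat -> nat) (deg : nat -> nat -> 'X_{1..n})
  (lam : nat -> nat -> nat -> K) (i : nat)
  (u : 'cV[{mpoly K[Tnum m]}]_(beta i)) : Prop :=
  forall j : 'I_(beta i), @Lind K n m Lgen beta deg lam i j (u j ord0).

(* matrix of d^*_{i+1} : F^*_{i+1} -> F^*_i, the scalar matrix lambda^{(i+1)} *)
Definition dT (K : fieldType) (N : nat) (beta : nat -> nat)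
  (lam : nat -> nat -> nat -> K) (i : nat)
  : 'M[{mpoly K[N]}]_(beta i, beta i.+1) :=
  \matrix_(k < beta i, j < beta i.+1) (lam i.+1 k j)%:MP.

(* Grade T, and with it F^*, by the monomials x^c of T.  Since L_{l,v} shrinks as v
   grows, x^c lies in L_j = prod_l L_{l,a_j(l)} iff a_j <= b(c), where b(c)_l is the
   largest a_k(l) such that the l-th block of c lies in L_{l,a_k(l)} ([Lbound]).  In a
   minimal Z^n-graded resolution each a_{ij} is the lcm of the a_{i-1,k} with
   lambda_{kj} <> 0 ([deg_le_bound]), so x^c lies in L_{ij} iff a_{ij} <= b(c) for all
   i >= 1.  Hence the x^c-component of F^* is the complex of the scalar matrices
   lambda restricted to the basis elements of multidegree at most b(c): the
   degree-b(c) strand of the resolution of S/I, which is exact. *)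

From HB Require Import structures.
From mathcomp Require Import all_boot all_order all_algebra.
From mathcomp Require Import mpoly.
From mathcomp Require Import zify.
Import GRing.Theory.
Local Open Scope ring_scope.
Set Implicit Arguments. Unset Strict Implicit. Unset Printing Implicit Defensive.

Section IdealSpan.
Variables (R : comNzRingType) (P : R -> Prop).

Lemma ideal_span_ind (Q : R -> Prop) :
  Q 0 -> (forall f g, Q f -> Q g -> Q (f + g)) -> (forall c g, P g -> Q (c * g)) ->
  forall f, ideal_span P f -> Q f.
Proof. by move=> Q0 QD QM f [k [c [g [Pg ->]]]]; apply: (big_ind Q) => // i _; apply: QM. Qed.

Lemma ideal_span0 : ideal_span P 0.
Proof. by exists 0%N, (fun _ => 0), (fun _ => 0); split => [[]|]; rewrite ?big_ord0. Qed.

Lemma ideal_span_mem g : P g -> ideal_span P g.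
Proof. by move=> Pg; exists 1%N, (fun _ => 1), (fun _ => g); rewrite big_ord1 mul1r. Qed.

Lemma ideal_spanD f g : ideal_span P f -> ideal_span P g -> ideal_span P (f + g).
Proof.
move=> [k1 [c1 [g1 [P1 ->]]]] [k2 [c2 [g2 [P2 ->]]]].
pose glue T (x1 : 'I_k1 -> T) (x2 : 'I_k2 -> T) (i : 'I_(k1 + k2)) :=
  match split i with inl a => x1 a | inr b => x2 b end.
exists (k1 + k2)%N, (glue _ c1 c2), (glue _ g1 g2); split.
  by move=> i; rewrite /glue; case: split.
by rewrite big_split_ord /glue; congr (_ + _); apply: eq_bigr => i _;
  [rewrite (unsplitK (inl i)) | rewrite (unsplitK (inr i))].
Qed.

Lemma ideal_spanMl h f : ideal_span P f -> ideal_span P (h * f).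
Proof.
move=> [k [c [g [Pg ->]]]]; exists k, (fun i => h * c i), g; split => //.
by rewrite mulr_sumr; apply: eq_bigr => i _; rewrite mulrA.
Qed.

End IdealSpan.

Section MonomialsUpClosed.
Variables (K : fieldType) (N : nat) (Q : pred 'X_{1..N}).

Definition msupp_in (f : {mpoly K[N]}) := forall c, c \in msupp f -> Q c.

Lemma msupp_inX mu : Q mu -> msupp_in 'X_[mu].
Proof. by move=> Qmu c /mem_msuppXP <-. Qed.

Lemma msupp_in0 : msupp_in 0.
Proof. by move=> c; rewrite msupp0. Qed.

Lemma msupp_inD f g : msupp_in f -> msupp_in g -> msupp_in (f + g).
Proof. by move=> Qf Qg c /msuppD_le; rewrite mem_cat => /orP [/Qf|/Qg]. Qed.

Hypothesis Q_up : forall c d, Q c -> Q (d + c)%MM.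

Lemma msupp_inMl h f : msupp_in f -> msupp_in (h * f).
Proof. by move=> Qf c /msuppM_le /allpairsP [[c1 c2] /= [_ /Qf Qc2 ->]]; apply: Q_up. Qed.

Lemma msupp_in_ideal_span P f :
  (forall g, P g -> msupp_in g) -> ideal_span P f -> msupp_in f.
Proof.
by move=> PQ; apply: ideal_span_ind => [|f1 f2|c g /PQ /msupp_inMl //];
  [exact: msupp_in0 | exact: msupp_inD].
Qed.

End MonomialsUpClosed.

Section MonomialIdeal.
Variables (K : fieldType) (N : nat) (G : seq 'X_{1..N}).

Lemma monomial_ideal_X mu : has (fun g => (g <= mu)%MM) G -> monomial_ideal (K:=K) G 'X_[mu].
Proof.
case/hasP => g Gg le_g_mu; rewrite -(submK le_g_mu) mpolyXD.
by apply/ideal_spanMl/ideal_span_mem; exists g.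
Qed.

Lemma monomial_ideal_msupp (f : {mpoly K[N]}) c :
  monomial_ideal G f -> c \in msupp f -> has (fun g => (g <= c)%MM) G.
Proof.
move=> If; move: c; apply: (msupp_in_ideal_span (Q := fun c => has _ G) _ _ If).
  move=> c d /hasP [g Gg le_g].
  by apply/hasP; exists g => //; apply: lepm_trans le_g (lem_addl _ _).
by move=> g [mu Gmu ->]; apply: msupp_inX; apply/hasP; exists mu; rewrite ?lepm_refl.
Qed.

End MonomialIdeal.

Section TBlocks.
Variables (K : fieldType) (n : nat) (m : 'I_n -> nat).

Definition tblock l (c : 'X_{1..Tnum m}) : 'X_{1..m l} := [multinom c (Tvar k) | k < m l].

Definition tshift l (mu : 'X_{1..m l}) : 'X_{1..Tnum m} :=
  (\sum_(k < m l) U_(Tvar k) *+ mu k)%MM.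

Lemma tshiftE l mu t : tshift mu t = (\sum_(k < m l) (Tvar k == t) * mu k)%N.
Proof. by rewrite mnm_sumE; apply: eq_bigr => k _; rewrite mulmnE mnm1E mulnC. Qed.

Lemma Tvar_inj l : injective (@Tvar n m l).
Proof.
move=> k k' e; apply: val_inj.
by have := congr1 (fun t => val (tagnat.sig2 t)) e; rewrite /Tvar !tagnat.Rank2K.
Qed.

Lemma tblock_tshift l (mu : 'X_{1..m l}) : tblock l (tshift mu) = mu.
Proof.
apply/mnmP => k; rewrite mnmE tshiftE (bigD1 k) //= eqxx mul1n big1 ?addn0 //.
by move=> k' ne; rewrite (inj_eq (@Tvar_inj l)) (negbTE ne).
Qed.

Lemma tblockD l c d : tblock l (c + d)%MM = (tblock l c + tblock l d)%MM.
Proof. by apply/mnmP => k; rewrite mnmE (mnmDE (Tvar k)) !mnmE. Qed.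

Lemma Tincl_X l (mu : 'X_{1..m l}) : Tincl ('X_[mu] : {mpoly K[m l]}) = 'X_[tshift mu].
Proof.
rewrite /Tincl comp_mpolyX /tshift -mprodXnE; apply: eq_bigr => k _.
by rewrite tnth_mktuple.
Qed.

Lemma TinclM l : {morph @Tincl K n m l : p q / p * q}.
Proof. exact: rmorphM. Qed.

(* Every variable of T lies in exactly one block, namely that of [tagnat.sig1 t]. *)
Lemma sum_tshift_tblock c : (\sum_(l < n) tshift (tblock l c))%MM = c.
Proof.
apply/mnmP => t; rewrite mnm_sumE.
under eq_bigr => l _ do rewrite tshiftE.
rewrite (bigD1 (tagnat.sig1 t)) //= (bigD1 (tagnat.sig2 t)) //= /Tvar tagnat.sig2K.
rewrite eqxx mul1n mnmE /Tvar tagnat.sig2K !big1 ?addn0 // => [l ne|k ne].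
  apply: big1 => k _; case: eqP => // e.
  by move: ne; rewrite -e tagnat.Rank1K eqxx.
case: eqP => // e; move: ne; rewrite -(@Tvar_inj _ k (tagnat.sig2 t)) ?eqxx //.
by rewrite /Tvar tagnat.sig2K.
Qed.

Lemma prod_Tincl_tblock c : \prod_(l < n) Tincl ('X_[tblock l c] : {mpoly K[m l]}) = 'X_[c].
Proof.
under eq_bigr => l _ do rewrite Tincl_X.
by rewrite mprodXE sum_tshift_tblock.
Qed.

End TBlocks.

Definition mgcd n (m1 m2 : 'X_{1..n}) : 'X_{1..n} := [multinom minn (m1 i) (m2 i) | i < n].

Lemma lem_mgcd n (m m1 m2 : 'X_{1..n}) :
  (m <= mgcd m1 m2)%MM = (m <= m1)%MM && (m <= m2)%MM.
Proof.
apply/mnm_lepP/andP => [le_m|[/mnm_lepP le1 /mnm_lepP le2] i].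
  by split; apply/mnm_lepP => i; move: (le_m i); rewrite mnmE leq_min => /andP [].
by rewrite mnmE leq_min le1 le2.
Qed.

Lemma lem_subm2r n (a b c : 'X_{1..n}) :
  (a <= b)%MM -> (a <= c)%MM -> (b - a <= c - a)%MM = (b <= c)%MM.
Proof.
move=> /mnm_lepP le_ab /mnm_lepP le_ac; apply/mnm_lepP/mnm_lepP => le i;
  move: (le i) (le_ab i) (le_ac i); rewrite ?mnmBE; lia.
Qed.

Lemma submBB n (a b c : 'X_{1..n}) : (a <= b)%MM -> (c - a - (b - a) = c - b)%MM.
Proof. by move=> /mnm_lepP le_ab; apply/mnmP => i; rewrite !mnmBE; move: (le_ab i); lia. Qed.

Lemma mcoeffXM (K : fieldType) N (d c : 'X_{1..N}) (q : {mpoly K[N]}) :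
  ('X_[d] * q)@_c = if (d <= c)%MM then q@_(c - d) else 0.
Proof.
rewrite -commr_mpolyX; case: ifP => le_dc; first by rewrite -{1}(submK le_dc) addmC mcoeffMX.
apply/eqP; rewrite mcoeff_eq0; apply/negP; rewrite (perm_mem (msuppMX q d)) => /mapP [c' _ e].
by move: le_dc; rewrite e lem_addr.
Qed.

(* [le_bound ob a] reads [a <= b] for [ob = Some b]; [None] is below every multidegree. *)
Definition le_bound n (ob : option 'X_{1..n}) (a : 'X_{1..n}) : bool :=
  if ob is Some b then (a <= b)%MM else false.

Lemma le_bound_trans n ob (a a' : 'X_{1..n}) : (a <= a')%MM -> le_bound ob a' -> le_bound ob a.
Proof. by case: ob => //= b; apply: lepm_trans. Qed.

Definition lamM (K : fieldType) (beta : nat -> nat) (lam : nat -> nat -> nat -> K) i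
  : 'M[K]_(beta i, beta i.+1) := \matrix_(k, j) lam i.+1 k j.

Section Strand.
Variables (K : fieldType) (n : nat) (beta : nat -> nat) (deg : nat -> nat -> 'X_{1..n})
  (lam : nat -> nat -> nat -> K).
Hypothesis deg_mono : forall i k j, (k < beta i)%N -> (j < beta i.+1)%N ->
  lam i.+1 k j != 0 -> (deg i k <= deg i.+1 j)%MM.
Hypothesis deg_neq : forall i k j, (k < beta i)%N -> (j < beta i.+1)%N ->
  lam i.+1 k j != 0 -> deg i k != deg i.+1 j.
Hypothesis dS_exact : forall i (u : 'cV[{mpoly K[n]}]_(beta i.+1)),
  dS beta deg lam i *m u = 0 <-> exists w : 'cV_(beta i.+2), u = dS beta deg lam i.+1 *m w.

Local Notation lamM := (lamM beta lam).
Local Notation dS := (dS beta deg lam).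

Definition bounded_by i ob (v : 'cV[K]_(beta i)) :=
  forall k : 'I_(beta i), ~~ le_bound ob (deg i k) -> v k 0 = 0.

(* The degree-[b] strand of the resolution is the complex of K-vector spaces
   spanned by the basis elements of degree at most [b], with differentials [lamM]. *)
Definition strand_coef i b (u : 'cV[{mpoly K[n]}]_(beta i)) : 'cV[K]_(beta i) :=
  \col_k (if (deg i k <= b)%MM then (u k 0)@_(b - deg i k) else 0).

Definition strand_lift i b (v : 'cV[K]_(beta i)) : 'cV[{mpoly K[n]}]_(beta i) :=
  \col_k ((v k 0)%:MP * 'X_[b - deg i k]).

Lemma strand_coef_dS i b u : strand_coef b (dS i *m u) = lamM i *m strand_coef b u.
Proof.
apply/matrixP => k z; rewrite (ord1 z) !mxE; case: ifP => le_kb.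
  rewrite raddf_sum /=; apply: eq_bigr => j _.
  rewrite !mxE -mulrA mcoeffCM mcoeffXM.
  have [->|nz] := eqVneq (lam i.+1 k j) 0; first by rewrite !mul0r.
  have le_kj := deg_mono (ltn_ord k) (ltn_ord j) nz.
  by rewrite lem_subm2r // submBB.
rewrite big1 // => j _; rewrite !mxE.
have [->|nz] := eqVneq (lam i.+1 k j) 0; first by rewrite !mul0r.
case: ifP; rewrite ?mulr0 // => le_jb.
by move: le_kb; rewrite (lepm_trans (deg_mono (ltn_ord k) (ltn_ord j) nz) le_jb).
Qed.

Lemma strand_coef_lift i b (v : 'cV[K]_(beta i)) :
  bounded_by (Some b) v -> strand_coef b (strand_lift b v) = v.
Proof.
move=> vb; apply/matrixP => k z; rewrite (ord1 z) !mxE.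
by case: ifP => le_kb; [rewrite mcoeffCM mcoeffX eqxx mulr1 | rewrite vb //= le_kb].
Qed.

Lemma dS_strand_lift i b (v : 'cV[K]_(beta i.+1)) :
  bounded_by (Some b) v -> dS i *m strand_lift b v = strand_lift b (lamM i *m v).
Proof.
move=> vb; apply/matrixP => k z; rewrite (ord1 z) !mxE.
rewrite (big_morph _ (@mpolyCD _ _) (@mpolyC0 _ _)) mulr_suml.
apply: eq_bigr => j _; rewrite !mxE.
have [->|nz] := eqVneq (lam i.+1 k j) 0; first by rewrite !mpolyC0 !mul0r.
have [->|vnz] := eqVneq (v j 0) 0; first by rewrite !(mulr0, mpolyC0, mul0r).
have le_kj := deg_mono (ltn_ord k) (ltn_ord j) nz.
have le_jb : (deg i.+1 j <= b)%MM by apply: contraNT vnz => le_jb; rewrite vb.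
rewrite mpolyCM -!mulrA; congr (_ * _); rewrite mulrCA -mpolyXD; congr (_ * 'X_[_]).
by apply/mnmP => t; rewrite !mnmDE !mnmBE; move: (mnm_lepP le_kj t) (mnm_lepP le_jb t); lia.
Qed.

Lemma strand_exact i ob (v : 'cV[K]_(beta i.+1)) : bounded_by ob v -> lamM i *m v = 0 ->
  exists w, bounded_by ob w /\ v = lamM i.+1 *m w.
Proof.
case: ob => [b|] vb v_cycle; last first.
  exists 0; split; first by move=> k _; rewrite mxE.
  by rewrite mulmx0; apply/matrixP => k z; rewrite (ord1 z) vb ?mxE.
have /dS_exact [W eqW] : dS i *m strand_lift b v = 0.
  by rewrite dS_strand_lift // v_cycle; apply/matrixP => k z; rewrite !mxE mpolyC0 mul0r.
exists (strand_coef b W); split; first by move=> k /= /negbTE le_kb; rewrite mxE le_kb.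
by rewrite -strand_coef_dS -eqW strand_coef_lift.
Qed.

Lemma lamM_complex i : lamM i *m lamM i.+1 = 0.
Proof.
suff col0 j : lamM i *m (lamM i.+1 *m (delta_mx j 0 : 'cV_(beta i.+2))) = 0.
  apply/matrixP => k j; move: (col0 j); rewrite mulmxA -colE.
  by move=> /matrixP/(_ k 0); rewrite !mxE.
set e := delta_mx j 0; have eb : bounded_by (Some (deg i.+2 j)) e.
  by move=> k; rewrite mxE; case: eqP => // -> /=; rewrite lepm_refl.
have ddS : dS i *m (dS i.+1 *m strand_lift (deg i.+2 j) e) = 0.
  by apply/dS_exact; exists (strand_lift (deg i.+2 j) e).
rewrite -(strand_coef_lift eb) -!strand_coef_dS ddS.
by apply/matrixP => k z; rewrite !mxE mcoeff0; case: ifP.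
Qed.

(* A cycle of the strand is a boundary, and by minimality no boundary of elements
   of degree at most [deg i.+2 j] reaches [j]. *)
Lemma cycle_coef_deg i (j : 'I_(beta i.+2)) v :
  bounded_by (Some (deg i.+2 j)) v -> lamM i.+1 *m v = 0 -> v j 0 = 0.
Proof.
move=> vb v_cycle; have [z [zb ->]] := strand_exact vb v_cycle.
rewrite mxE big1 // => l _; rewrite mxE.
have [->|nz] := eqVneq (lam i.+3 j l) 0; first by rewrite mul0r.
have [->|znz] := eqVneq (z l 0) 0; first by rewrite mulr0.
have le_jl := deg_mono (ltn_ord j) (ltn_ord l) nz.
have le_lj : (deg i.+3 l <= deg i.+2 j)%MM by apply: contraNT znz => le_lj; rewrite zb.
have := deg_neq (ltn_ord j) (ltn_ord l) nz.
suff -> : deg i.+2 j = deg i.+3 l by rewrite eqxx.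
by apply/mnmP => t; move: (mnm_lepP le_jl t) (mnm_lepP le_lj t); lia.
Qed.

(* [deg i.+2 j] is the lcm of the degrees of the basis elements occurring in the
   boundary of [f_{i+2,j}]: otherwise [e_j] minus a preimage of its boundary in
   the strand below the gcd of [b] and [deg i.+2 j] would contradict [cycle_coef_deg]. *)
Lemma deg_le_bound i (j : 'I_(beta i.+2)) ob :
  (forall k : 'I_(beta i.+1), lam i.+2 k j != 0 -> le_bound ob (deg i.+1 k)) ->
  le_bound ob (deg i.+2 j).
Proof.
move=> bound_j; set dj := deg i.+2 j; set e := delta_mx j 0 : 'cV[K]_(beta i.+2).
pose ob' := omap (fun b => mgcd b dj) ob.
have le_ob' a : le_bound ob' a = le_bound ob a && (a <= dj)%MM.
  by case: ob {bound_j} @ob' => //= b; rewrite lem_mgcd.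
have yb : bounded_by ob' (lamM i.+1 *m e).
  move=> k; rewrite le_ob' !mxE (bigD1 j) //= big1 => [|l /negbTE ne]; last first.
    by rewrite !mxE ne mulr0.
  rewrite !mxE !eqxx mulr1 addr0; apply: contraNeq => nz.
  by rewrite bound_j // deg_mono.
have y_cycle : lamM i *m (lamM i.+1 *m e) = 0 by rewrite mulmxA lamM_complex mul0mx.
have [w [wb eq_w]] := strand_exact yb y_cycle.
apply/contraT => not_le_dj; have wj : w j 0 = 0 by rewrite wb // le_ob' (negbTE not_le_dj).
have : (e - w) j 0 = 0.
  apply: cycle_coef_deg => [l not_le_l|]; last by rewrite mulmxBr -eq_w subrr.
  rewrite !mxE; case: eqP => [ej|_]; first by move: not_le_l; rewrite ej /= lepm_refl.
  by rewrite sub0r wb ?oppr0 // le_ob' negb_and not_le_l orbT.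
by rewrite !mxE !eqxx wj subr0 => /eqP; rewrite oner_eq0.
Qed.

End Strand.

Section CoefficientColumns.
Variables (K : fieldType) (N r : nat).

Definition mcoeff_col c (u : 'cV[{mpoly K[N]}]_r) : 'cV[K]_r := \col_j (u j 0)@_c.

Lemma mcoeff_colP (u v : 'cV[{mpoly K[N]}]_r) :
  (forall c, mcoeff_col c u = mcoeff_col c v) -> u = v.
Proof.
move=> eq_uv; apply/matrixP => j z; rewrite (ord1 z); apply/mpolyP => c.
by move/matrixP/(_ j 0): (eq_uv c); rewrite !mxE.
Qed.

Definition mpoly_col (C : seq 'X_{1..N}) (w : 'X_{1..N} -> 'cV[K]_r) : 'cV[{mpoly K[N]}]_r :=
  \col_j \sum_(c <- C) (w c j 0)%:MP * 'X_[c].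

Lemma mcoeff_mpoly_col C w d :
  uniq C -> mcoeff_col d (mpoly_col C w) = if d \in C then w d else 0.
Proof.
move=> uniq_C; apply/matrixP => j z; rewrite (ord1 z) !mxE raddf_sum /=.
under eq_bigr => c _ do rewrite mcoeffCM mcoeffX.
case: ifPn => [dC|dNC].
  rewrite (bigD1_seq d) //= eqxx mulr1 big1 ?addr0 // => c /negbTE ne.
  by rewrite ne mulr0.
rewrite mxE big_seq big1 // => c cC.
have /negbTE -> /= : c != d by apply: contraNneq dNC => <-.
by rewrite mulr0.
Qed.

End CoefficientColumns.

Lemma mcoeff_col_dT (K : fieldType) N beta (lam : nat -> nat -> nat -> K) i c u :
  mcoeff_col c (dT N beta lam i *m u) = lamM beta lam i *m mcoeff_col c u.
Proof.
apply/matrixP => k z; rewrite (ord1 z) !mxE raddf_sum /=.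
by apply: eq_bigr => j _; rewrite !mxE mcoeffCM.
Qed.

Section InducedComplex.
Variables (K : fieldType) (n : nat) (beta : nat -> nat) (deg : nat -> nat -> 'X_{1..n})
  (lam : nat -> nat -> nat -> K) (m : 'I_n -> nat)
  (Lgen : forall l : 'I_n, nat -> seq 'X_{1..m l}).
Hypothesis deg_mono : forall i k j, (k < beta i)%N -> (j < beta i.+1)%N ->
  lam i.+1 k j != 0 -> (deg i k <= deg i.+1 j)%MM.
Hypothesis deg_neq : forall i k j, (k < beta i)%N -> (j < beta i.+1)%N ->
  lam i.+1 k j != 0 -> deg i k != deg i.+1 j.
Hypothesis dS_exact : forall i (u : 'cV[{mpoly K[n]}]_(beta i.+1)),
  dS beta deg lam i *m u = 0 <-> exists w : 'cV_(beta i.+2), u = dS beta deg lam i.+1 *m w.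
Hypothesis Lgen_mono : forall (l : 'I_n) (j k : nat), (j < beta 1%N)%N -> (k < beta 1%N)%N ->
  (deg 1%N k l <= deg 1%N j l)%N -> forall f : {mpoly K[m l]},
  monomial_ideal (Lgen l (deg 1%N j l)) f -> monomial_ideal (Lgen l (deg 1%N k l)) f.
Hypothesis beta0 : beta 0 = 1%N.
Hypothesis lam1 : forall j, (j < beta 1%N)%N -> lam 1%N 0%N j = 1.

Local Notation LI := (Lind Lgen beta deg lam).
Local Notation Fstar i := (@Fstar K n m Lgen beta deg lam i).
Local Notation dT := (dT (Tnum m) beta lam).

Definition in_Lgen l v (c : 'X_{1..Tnum m}) : bool :=
  has (fun g => (g <= tblock l c)%MM) (Lgen l v).

Definition Lexp l c : nat := (\max_(k < beta 1%N | in_Lgen l (deg 1%N k l) c) deg 1%N k l)%N.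

Definition Lbound (c : 'X_{1..Tnum m}) : option 'X_{1..n} :=
  if [forall l, [exists k : 'I_(beta 1%N), in_Lgen l (deg 1%N k l) c]]
  then Some [multinom Lexp l c | l < n] else None.

Lemma in_Lgen_addl l v c d : in_Lgen l v c -> in_Lgen l v (d + c)%MM.
Proof.
move=> /hasP [g Gg le_g]; apply/hasP; exists g => //.
by rewrite tblockD; apply: lepm_trans le_g (lem_addl _ _).
Qed.

Lemma in_Lgen_mono l (j k : 'I_(beta 1%N)) c :
  (deg 1%N k l <= deg 1%N j l)%N -> in_Lgen l (deg 1%N j l) c -> in_Lgen l (deg 1%N k l) c.
Proof.
move=> le_kj /(@monomial_ideal_X K) /(Lgen_mono (ltn_ord j) (ltn_ord k) le_kj) Ik.
by apply: (monomial_ideal_msupp Ik); rewrite msuppX mem_seq1.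
Qed.

Lemma le_Lbound_deg1 (j : 'I_(beta 1%N)) c :
  le_bound (Lbound c) (deg 1%N j) = [forall l, in_Lgen l (deg 1%N j l) c].
Proof.
rewrite /Lbound; case: ifPn => [/forallP all_l | no_bound]; last first.
  apply/esym/negbTE; apply: contra no_bound => /forallP in_j.
  by apply/forallP => l; apply/existsP; exists j; exact: in_j.
apply/mnm_lepP/forallP => [le_j l | in_j l]; last first.
  by rewrite mnmE; apply: (leq_bigmax_cond _ (in_j l)).
have [k0 in_k0] := existsP (all_l l).
move: (le_j l); rewrite mnmE /Lexp (bigmax_eq_arg _ in_k0).
by case: arg_maxnP => // k in_k _ le_jk; apply: in_Lgen_mono le_jk in_k.
Qed.

Lemma Lprod_msupp (a : 'X_{1..n}) (f : {mpoly K[Tnum m]}) c :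
  Lprod Lgen a f -> c \in msupp f -> [forall l, in_Lgen l (a l) c].
Proof.
move=> La c_f; apply/forallP => l; move: c c_f.
have up := @in_Lgen_addl l (a l).
apply: (msupp_in_ideal_span up _ La) => _ [u [Lu ->]].
rewrite (bigD1 l) //= mulrC; apply: (msupp_inMl up).
apply: (ideal_span_ind (Q := fun p => msupp_in (in_Lgen l (a l)) (Tincl p))) (Lu l).
- by rewrite /Tincl raddf0; apply: msupp_in0.
- by move=> p q; rewrite /Tincl raddfD; apply: msupp_inD.
move=> q _ [mu G_mu ->]; rewrite TinclM Tincl_X.
apply/(msupp_inMl up)/msupp_inX; apply/hasP; exists mu => //.
by rewrite tblock_tshift lepm_refl.
Qed.

Lemma Lprod_X (a : 'X_{1..n}) c :
  [forall l, in_Lgen l (a l) c] -> Lprod Lgen a ('X_[c] : {mpoly K[Tnum m]}).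
Proof.
move=> /forallP in_c; apply: ideal_span_mem; exists (fun l => 'X_[tblock l c]).
by rewrite prod_Tincl_tblock; split=> // l; apply: monomial_ideal_X; exact: in_c.
Qed.

Lemma Lind0 i j : LI i j 0.
Proof. by elim: i j => [|[|i] IH] j //=; [exact: ideal_span0 | move=> k _ _; apply: IH]. Qed.

Lemma LindD i j f g : LI i j f -> LI i j g -> LI i j (f + g).
Proof.
elim: i j f g => [|[|i] IH] j f g //=; first exact: ideal_spanD.
by move=> Lf Lg k lt_k nz; apply: IH; [exact: Lf | exact: Lg].
Qed.

Lemma LindMl i j h f : LI i j f -> LI i j (h * f).
Proof.
elim: i j f => [|[|i] IH] j f //=; first exact: ideal_spanMl.
by move=> Lf k lt_k nz; apply: IH; exact: Lf.
Qed.

Lemma Lind_msupp i j f c : (j < beta i.+1)%N ->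
  LI i.+1 j f -> c \in msupp f -> le_bound (Lbound c) (deg i.+1 j).
Proof.
elim: i j f => [|i IH] j f lt_j /= Lf c_f.
  by rewrite (le_Lbound_deg1 (Ordinal lt_j)); exact: Lprod_msupp Lf c_f.
apply: (deg_le_bound deg_mono deg_neq dS_exact (j := Ordinal lt_j)) => k nz.
exact: IH (ltn_ord k) (Lf k (ltn_ord k) nz) c_f.
Qed.

Lemma Lind_X i j c : (j < beta i.+1)%N -> le_bound (Lbound c) (deg i.+1 j) -> LI i.+1 j 'X_[c].
Proof.
elim: i j => [|i IH] j lt_j /= le_j.
  by apply: Lprod_X; rewrite -(le_Lbound_deg1 (Ordinal lt_j)).
by move=> k lt_k nz; apply: IH lt_k (le_bound_trans (deg_mono lt_k lt_j nz) le_j).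
Qed.

Lemma Fstar_bounded i u c : Fstar i.+1 u -> bounded_by deg (Lbound c) (mcoeff_col c u).
Proof.
move=> u_in j not_le_j; rewrite mxE; apply/eqP; rewrite mcoeff_eq0.
by apply: contra not_le_j; exact: Lind_msupp (ltn_ord j) (u_in j).
Qed.

Lemma Fstar_mpoly_col i C w :
  (forall c, bounded_by deg (Lbound c) (w c)) -> Fstar i.+1 (mpoly_col C w).
Proof.
move=> wb l; rewrite mxE; apply: (big_ind (LI i.+1 l)); [exact: Lind0 | exact: LindD |] => c _.
have [->|nz] := eqVneq (w c l 0) 0; first by rewrite mpolyC0 mul0r; apply: Lind0.
apply/LindMl/Lind_X => //; apply: contraNT nz => not_le; apply/eqP; exact: wb.
Qed.

Lemma Fstar_acyclic i u : Fstar i.+1 u -> dT i *m u = 0 ->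
  exists w, Fstar i.+2 w /\ u = dT i.+1 *m w.
Proof.
move=> u_in u_cycle.
pose C := undup (flatten [seq msupp (u j 0) | j <- enum 'I_(beta i.+1)]).
have /fin_all_exists [W W_spec] (x : seq_sub C) :
    exists w, bounded_by deg (Lbound (val x)) w /\
              mcoeff_col (val x) u = lamM beta lam i.+1 *m w.
  apply: (strand_exact deg_mono dS_exact); first exact: Fstar_bounded.
  by rewrite -mcoeff_col_dT u_cycle; apply/matrixP => k z; rewrite !mxE mcoeff0.
pose w c := if insub c is Some x then W x else 0.
have w_bounded c : bounded_by deg (Lbound c) (w c).
  by rewrite /w; case: insubP => [x _ <-|_ k _]; [exact: (W_spec x).1 | rewrite mxE].
exists (mpoly_col C w); split; first exact: Fstar_mpoly_col.
apply: mcoeff_colP => d; rewrite mcoeff_col_dT mcoeff_mpoly_col ?undup_uniq //.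
case: ifPn => [dC|dNC]; first by rewrite /w insubT; exact: (W_spec (SeqSub dC)).2.
rewrite mulmx0; apply/matrixP => j z; rewrite (ord1 z) !mxE; apply/eqP; rewrite mcoeff_eq0.
apply: contra dNC => d_uj; rewrite mem_undup; apply/flattenP; exists (msupp (u j 0)) => //.
by apply: map_f; rewrite mem_enum.
Qed.

Lemma dT0_mulmx_const (u : 'cV[{mpoly K[Tnum m]}]_(beta 1%N)) f :
  dT 0 *m u = const_mx f <-> \sum_j u j 0 = f.
Proof.
have dT0_mulmx k : (dT 0 *m u) k 0 = \sum_j u j 0.
  have k0 : nat_of_ord k = 0%N.
    by move: (ltn_ord k); rewrite [X in (_ < X)%N]beta0; case: (nat_of_ord k).
  by rewrite mxE; apply: eq_bigr => j _; rewrite mxE k0 lam1 // mul1r.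
split=> [/matrixP/(_ (cast_ord (esym beta0) ord0) 0)|sum_u]; first by rewrite dT0_mulmx mxE.
by apply/matrixP => k z; rewrite (ord1 z) dT0_mulmx mxE.
Qed.

Lemma Fstar_H0 f :
  ideal_span (fun g => exists2 j, (j < beta 1%N)%N & Lprod Lgen (deg 1%N j) g) f
  <-> exists u, Fstar 1%N u /\ dT 0 *m u = const_mx f.
Proof.
split=> [span_f|[u [u_in /dT0_mulmx_const <-]]]; last first.
  exists (beta 1%N), (fun=> 1), (fun j => u j 0); split.
    by move=> j; exists (nat_of_ord j) => //; exact: u_in.
  by apply: eq_bigr => j _; rewrite mul1r.
have [u [u_in <-]] : exists u, Fstar 1%N u /\ \sum_j u j 0 = f; last first.
  by exists u; split => //; apply/dT0_mulmx_const.
move: f span_f; apply: ideal_span_ind => [|f1 f2 [u1 [u1_in <-]] [u2 [u2_in <-]]|].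
- exists 0; split => [j|]; first by rewrite mxE; exact: (Lind0 1%N).
  by rewrite big1 // => j _; rewrite mxE.
- exists (u1 + u2); split => [j|]; first by rewrite mxE; exact: LindD.
  by rewrite -big_split; apply: eq_bigr => j _; rewrite mxE.
- move=> c g [j lt_j Lg]; pose J := Ordinal lt_j.
  exists (\col_k (if k == J then c * g else 0)); split => [k|].
    by rewrite mxE; case: eqP => [->|_]; [exact: ideal_spanMl | exact: (Lind0 1%N)].
  rewrite (bigD1 J) //= big1 => [|k /negbTE ne]; first by rewrite !mxE eqxx addr0.
  by rewrite mxE ne.
Qed.

End InducedComplex.

Theorem theorem1p4 (K : fieldType) (n p : nat)
  (beta : nat -> nat) (deg : nat -> nat -> 'X_{1..n})
  (lam : nat -> nat -> nat -> K)
  (Hres : @is_min_graded_resolution K n p beta deg lam)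
  (HIneS : ~ @monomial_ideal K n (gensI beta deg) (1 : {mpoly K[n]}))
  (m : 'I_n -> nat) (Hm : forall l, (0 < m l)%N)
  (Lgen : forall l : 'I_n, nat -> seq 'X_{1..m l})
  (Hincl : forall (l : 'I_n) (j k : nat), (j < beta 1)%N -> (k < beta 1)%N ->
     (deg 1%N k l <= deg 1%N j l)%N ->
     forall f : {mpoly K[m l]},
       @monomial_ideal K (m l) (Lgen l (deg 1%N j l)) f ->
       @monomial_ideal K (m l) (Lgen l (deg 1%N k l)) f) :
  (forall (i : nat) (u : 'cV[{mpoly K[Tnum m]}]_(beta i.+1)),
     @Fstar K n m Lgen beta deg lam i.+1 u -> @dT K (Tnum m) beta lam i *m u = 0 ->
     exists w : 'cV_(beta i.+2),
       @Fstar K n m Lgen beta deg lam i.+2 w /\ u = @dT K (Tnum m) beta lam i.+1 *m w) /\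
  (forall f : {mpoly K[Tnum m]},
     ideal_span (fun g => exists2 j, (j < beta 1)%N & @Lprod K n m Lgen (deg 1%N j) g) f
     <-> exists u : 'cV_(beta 1%N),
           @Fstar K n m Lgen beta deg lam 1%N u /\ @dT K (Tnum m) beta lam 0 *m u = const_mx f).
Proof.
case: Hres => [[beta0 _] _ lam1 deg_mono [deg_neq dS_exact _ _]].
split; first exact: Fstar_acyclic deg_mono deg_neq dS_exact Hincl.
exact: Fstar_H0 beta0 lam1.
Qed.
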